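(* For every constant $c_0>0$ there is a constant $K$ (depending only on $c_0$) such that the following holds. For any real symmetric positive definite matrix $M$, any matrix $Z$ with $M^{-1}\approx_{c_0}ZZ^\top$, and any $\epsilon>0$, there exists a linear operator $\tilde C$, given by a polynomial expression in $M$, $Z$ and $Z^\top$ of degree at most $K\max(1,\log(1/\epsilon))$, such that $\tilde C\tilde C^\top\approx_\epsilon M^{-1}$.
   Context: For symmetric $A,B$, $A\approx_\epsilon B$ means $e^{\epsilon}A\succeq B\succeq e^{-\epsilon}A$ in the Loewner order. *)

From HB Require Import structures.
From mathcomp Require Import all_boot all_order all_algebra.
From mathcomp Require Import all_classical all_reals all_analysis.
Set Implicit Arguments. Unset Strict Implicit. Unset Printing Implicit Defensive.
Import Order.TTheory GRing.Theory Num.Theory.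
Local Open Scope ring_scope.

Definition loewner_le (R : realType) (n : nat) (A B : 'M[R]_n) : Prop :=
  forall x : 'cV[R]_n, (x^T *m A *m x) 0 0 <= (x^T *m B *m x) 0 0.

Definition symmetric_mx (R : realType) (n : nat) (A : 'M[R]_n) : Prop :=
  A^T = A.

Definition posdef_mx (R : realType) (n : nat) (A : 'M[R]_n) : Prop :=
  symmetric_mx A /\ forall x : 'cV[R]_n, x != 0 -> 0 < (x^T *m A *m x) 0 0.

Definition approx_mx (R : realType) (n : nat) (eps : R) (A B : 'M[R]_n) : Prop :=
  loewner_le B (expR eps *: A) /\ loewner_le (expR (- eps) *: A) B.

(* Typed non-commutative polynomial expressions in the letters M (n x n),
   Z (n x m) and Z^T (m x n).  A side index [false] stands for dimension n,
   [true] for dimension m; [expr a b] denotes a (dim a) x (dim b) matrix. *)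
Inductive expr (R : realType) : bool -> bool -> Type :=
| EM : expr R false false
| EZ : expr R false true
| EZt : expr R true false
| EId : forall a, expr R a a
| EScale : forall a b, R -> expr R a b -> expr R a b
| EAdd : forall a b, expr R a b -> expr R a b -> expr R a b
| EMul : forall a b c, expr R a b -> expr R b c -> expr R a c.

(* Degree of an expression (an upper bound for the degree of the polynomial
   it denotes; every polynomial of degree <= d has such an expression). *)
Fixpoint expr_deg (R : realType) (a b : bool) (e : expr R a b) : nat :=
  match e with
  | EM => 1 | EZ => 1 | EZt => 1 | EId _ => 0
  | EScale _ _ _ e1 => expr_deg e1
  | EAdd _ _ e1 e2 => maxn (expr_deg e1) (expr_deg e2)
  | EMul _ _ _ e1 e2 => expr_deg e1 + expr_deg e2
  end%N.

Definition side_dim (n m : nat) (a : bool) : nat := if a then m else n.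

Fixpoint expr_eval (R : realType) (n m : nat) (M : 'M[R]_n) (Z : 'M[R]_(n, m))
    (a b : bool) (e : expr R a b) : 'M[R]_(side_dim n m a, side_dim n m b) :=
  match e in expr _ a b return 'M[R]_(side_dim n m a, side_dim n m b) with
  | EM => M
  | EZ => Z
  | EZt => Z^T
  | EId _ => 1%:M
  | EScale _ _ c e1 => c *: expr_eval M Z e1
  | EAdd _ _ e1 e2 => expr_eval M Z e1 + expr_eval M Z e2
  | EMul _ _ _ e1 e2 => expr_eval M Z e1 *m expr_eval M Z e2
  end.

From Pilot Require Import Defs.
From HB Require Import structures.
From mathcomp Require Import all_boot all_order all_algebra.
From mathcomp Require Import all_classical all_reals all_analysis.
From mathcomp Require Import ring lra zify.
Set Implicit Arguments. Unset Strict Implicit. Unset Printing Implicit Defensive.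
Import Order.TTheory GRing.Theory Num.Theory.
Local Open Scope ring_scope.

(* With T := I - e^-c0 Z Z^T M, the hypothesis M^-1 ~_c0 Z Z^T says that T is
   self-adjoint for <x, y> := x^T M y, with spectrum in [0, tau] where
   tau := 1 - e^(-2 c0) < 1, and that Z Z^T M = e^c0 (I - T).  Let s_N be the
   degree-N truncation of the power series of (1 - x)^(-1/2).  Then
   C := e^(-c0/2) s_N(T) Z gives M C C^T M = M (I - d(T)), where the defect
   d := 1 - (1 - x) s_N^2 has nonnegative coefficients and d(t) <= t^(N+1) on
   [0, 1].  Hence 0 <= M^-1 - C C^T <= tau^(N+1) M^-1, and N = O(log(1/eps))
   suffices. *)

Section SqrtSeries.
Variable R : realFieldType.

(* [sqrt_coef k = 'C(2k, k) / 4^k], the coefficients of (1 - x)^(-1/2). *)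
Fixpoint sqrt_coef (k : nat) : R :=
  if k is k'.+1 then (k'%:R + 2^-1) / k%:R * sqrt_coef k' else 1.

Lemma sqrt_coefS k : k.+1%:R * sqrt_coef k.+1 = (k%:R + 2^-1) * sqrt_coef k.
Proof. by rewrite /= mulrA mulrCA mulfV ?mulr1 // pnatr_eq0. Qed.

Lemma sqrt_coef_ge0 k : 0 <= sqrt_coef k.
Proof.
by elim: k => [|k IH] //=; rewrite mulr_ge0 ?divr_ge0 ?addr_ge0 ?invr_ge0.
Qed.

Lemma sqrt_coef_decr k : sqrt_coef k.+1 <= sqrt_coef k.
Proof.
rewrite /=; apply: ler_piMl; first exact: sqrt_coef_ge0.
rewrite ler_pdivrMr ?ltr0n // mul1r -[k.+1]addn1 natrD lerD2l.
by rewrite invf_le1 ?ler1n // ltr0n.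
Qed.

Definition sqrt_conv k := \sum_(j < k.+1) sqrt_coef j * sqrt_coef (k - j).

Definition sqrt_conv_weighted k :=
  \sum_(j < k.+1) j%:R * (sqrt_coef j * sqrt_coef (k - j)).

Lemma sqrt_conv_weightedE k : 2 * sqrt_conv_weighted k = k%:R * sqrt_conv k.
Proof.
have sym : sqrt_conv_weighted k =
    \sum_(j < k.+1) (k - j)%:R * (sqrt_coef j * sqrt_coef (k - j)).
  rewrite /sqrt_conv_weighted (reindex_inj rev_ord_inj) /=.
  apply: eq_bigr => j _; rewrite subSS subKn; last by rewrite -ltnS.
  by rewrite [sqrt_coef (k - j) * _]mulrC.
rewrite mulr2n mulrDl mul1r {2}sym /sqrt_conv_weighted -big_split /=.
rewrite mulr_sumr; apply: eq_bigr => j _.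
by rewrite -mulrDl -natrD subnKC // -ltnS.
Qed.

Lemma sqrt_conv_weightedS k :
  sqrt_conv_weighted k.+1 = sqrt_conv_weighted k + sqrt_conv k / 2.
Proof.
rewrite /sqrt_conv_weighted big_ord_recl mul0r add0r /sqrt_conv mulr_suml.
rewrite -big_split /=; apply: eq_bigr => j _.
by rewrite /bump /= add1n subSS mulrA sqrt_coefS; field.
Qed.

Lemma sqrt_conv1 k : sqrt_conv k = 1.
Proof.
elim: k => [|k IH]; first by rewrite /sqrt_conv big_ord1 mulr1.
apply: (@mulfI _ k.+1%:R); first by rewrite pnatr_eq0.
rewrite -sqrt_conv_weightedE sqrt_conv_weightedS mulrDr sqrt_conv_weightedE IH.
by rewrite !mulr1 mul1r mulfV ?pnatr_eq0 // natr1.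
Qed.

Definition sqrt_trunc N : {poly R} := \poly_(i < N.+1) sqrt_coef i.

Lemma coef_sqrt_trunc_ge0 N k : 0 <= (sqrt_trunc N)`_k.
Proof. by rewrite coef_poly; case: ifP => // _; apply: sqrt_coef_ge0. Qed.

Lemma coef_sqrt_trunc_decr N k : (sqrt_trunc N)`_k.+1 <= (sqrt_trunc N)`_k.
Proof.
rewrite !coef_poly; case: ifP => [lt_kN|_]; first by rewrite ltnW // sqrt_coef_decr.
by case: ifP => // _; apply: sqrt_coef_ge0.
Qed.

Lemma coef_sqrt_trunc2_small N k : (k <= N)%N -> (sqrt_trunc N ^+ 2)`_k = 1.
Proof.
move=> le_kN; rewrite coefM -(sqrt_conv1 k); apply: eq_bigr => j _.
rewrite !coef_poly ifT; last by rewrite ltnS (leq_trans _ le_kN) // -ltnS.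
by rewrite ifT // ltnS (leq_trans (leq_subr _ _)).
Qed.

Lemma coef_sqrt_trunc2_ge0 N k : 0 <= (sqrt_trunc N ^+ 2)`_k.
Proof.
rewrite coefM; apply: sumr_ge0 => j _.
by apply: mulr_ge0; apply: coef_sqrt_trunc_ge0.
Qed.

Lemma coef_sqrt_trunc2_decr N k :
  (N <= k)%N -> (sqrt_trunc N ^+ 2)`_k.+1 <= (sqrt_trunc N ^+ 2)`_k.
Proof.
move=> le_Nk; rewrite !coefM big_ord_recr /=.
have -> : (sqrt_trunc N)`_k.+1 = 0 by rewrite coef_poly ltnNge ltnS le_Nk.
rewrite mul0r addr0.
apply: ler_sum => j _; apply: ler_wpM2l; first exact: coef_sqrt_trunc_ge0.
by rewrite subSn ?coef_sqrt_trunc_decr // -ltnS.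
Qed.

Definition sqrt_defect N : {poly R} := 1 - (1 - 'X) * sqrt_trunc N ^+ 2.

Lemma coef_sqrt_defect_ge0 N k : 0 <= (sqrt_defect N)`_k.
Proof.
rewrite /sqrt_defect mulrBl mul1r !coefB coefXM coef1.
case: k => [|k] /=; first by rewrite coef_sqrt_trunc2_small // subr0 subrr.
rewrite sub0r opprB subr_ge0.
have [le_Nk|lt_kN] := leqP N k; first exact: coef_sqrt_trunc2_decr.
by rewrite !coef_sqrt_trunc2_small // ltnW.
Qed.

Lemma sqrt_defect_le_pow N t : 0 <= t <= 1 -> (sqrt_defect N).[t] <= t ^+ N.+1.
Proof.
move=> /andP[t_ge0 t_le1]; set q := sqrt_trunc N ^+ 2.
have geom_le : \sum_(i < N.+1) t ^+ i <= q.[t].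
  rewrite (@horner_coef_wide _ (N.+1 + size q)) ?leq_addl //.
  rewrite -(big_mkord xpredT (fun i => q`_i * t ^+ i)).
  rewrite (big_cat_nat _ (n := N.+1)) ?leq_addr //= big_mkord.
  rewrite -[X in X <= _]addr0; apply: lerD.
    by apply: ler_sum => i _; rewrite coef_sqrt_trunc2_small ?mul1r // -ltnS.
  by apply: sumr_ge0 => i _; rewrite mulr_ge0 ?exprn_ge0 ?coef_sqrt_trunc2_ge0.
have -> : (sqrt_defect N).[t] = 1 - (1 - t) * q.[t] by rewrite !hornerE.
rewrite lerBlDr -lerBlDl -[1 - t ^+ _]opprB subrX1 -mulNr opprB.
by apply: ler_wpM2l; rewrite ?subr_ge0.
Qed.

End SqrtSeries.

Definition qform (R : comNzRingType) n (A : 'M[R]_n) (x : 'cV[R]_n) :=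
  (x^T *m A *m x) 0 0.

Lemma qformZ (R : comNzRingType) n c (A : 'M[R]_n) x :
  qform (c *: A) x = c * qform A x.
Proof. by rewrite /qform -scalemxAr -scalemxAl mxE. Qed.

Lemma qformB (R : comNzRingType) n (A B : 'M[R]_n) x :
  qform (A - B) x = qform A x - qform B x.
Proof. by rewrite /qform mulmxBr mulmxBl !mxE. Qed.

Lemma qform_mulmx (R : comNzRingType) n (A B : 'M[R]_n) y :
  qform (B^T *m A *m B) y = qform A (B *m y).
Proof. by rewrite /qform trmx_mul !mulmxA. Qed.

Section PolyForm.
Variables (R : realFieldType) (n : nat) (G T : 'M[R]_n.+1).
Hypothesis GT_sym : G *m T = T^T *m G.

Definition polyform (p : {poly R}) := qform (G *m horner_mx T p).

Lemma polyformD p q y : polyform (p + q) y = polyform p y + polyform q y.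
Proof. by rewrite /polyform /qform rmorphD !(mulmxDr, mulmxDl) mxE. Qed.

Lemma polyformZ c p y : polyform (c *: p) y = c * polyform p y.
Proof. by rewrite /polyform linearZ -scalemxAr qformZ. Qed.

Lemma polyformB p q y : polyform (p - q) y = polyform p y - polyform q y.
Proof. by rewrite polyformD -scaleN1r polyformZ mulN1r. Qed.

Lemma polyformC c y : polyform c%:P y = c * polyform 1 y.
Proof. by rewrite -alg_polyC polyformZ. Qed.

Lemma polyform_sum I (r : seq I) (F : I -> {poly R}) y :
  polyform (\sum_(i <- r) F i) y = \sum_(i <- r) polyform (F i) y.
Proof.
apply: (big_morph (fun p => polyform p y) (fun p q => polyformD p q y)).
by rewrite /polyform /qform rmorph0 !(mulmx0, mul0mx) mxE.
Qed.

Lemma mulmx_horner_adj p : G *m horner_mx T p = (horner_mx T p)^T *m G.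
Proof.
elim/poly_ind: p => [|p c IH]; first by rewrite rmorph0 mulmx0 trmx0 mul0mx.
rewrite rmorphD rmorphM /= horner_mx_X horner_mx_C -mulmxE.
have commTp : comm_mx T (horner_mx T p) by apply: comm_mx_horner.
rewrite mulmxDr mulmxA IH -mulmxA GT_sym mulmxA -trmx_mul -commTp trmx_mul.
by rewrite linearD /= tr_scalar_mx mulmxDl mul_mx_scalar mul_scalar_mx trmx_mul.
Qed.

Lemma polyform_conj p q y :
  polyform q (horner_mx T p *m y) = polyform (p * q * p) y.
Proof.
rewrite /polyform /qform !rmorphM -!mulmxE trmx_mul -!mulmxA.
by congr (fun A => (y^T *m A) 0 0); rewrite !mulmxA -mulmx_horner_adj.
Qed.

Lemma polyform_Xpow_mul_ge0 q :
    (forall y, 0 <= polyform q y) -> (forall y, 0 <= polyform ('X * q) y) ->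
  forall k y, 0 <= polyform ('X^k * q) y.
Proof.
move=> q_ge0 Xq_ge0 k y.
have halves j (r : {poly R}) : 'X^(j + j) * r = 'X^j * r * 'X^j by rewrite exprD mulrAC.
rewrite -[k]odd_double_half -addnn; case: (odd k) => /=.
  by rewrite add1n exprSr -mulrA halves -polyform_conj.
by rewrite add0n halves -polyform_conj.
Qed.

Variable tau : R.
Hypothesis tau_gt0 : 0 < tau.
Hypothesis one_ge0 : forall y, 0 <= polyform 1 y.
Hypothesis X_ge0 : forall y, 0 <= polyform 'X y.
Hypothesis X_le_tau : forall y, polyform 'X y <= tau * polyform 1 y.

(* [tau X (tau - X) = X (tau - X) X + (tau - X) X (tau - X)], and both terms
   are nonnegative by conjugation. *)
Lemma polyform_X_tau_ge0 y : 0 <= polyform ('X * (tau%:P - 'X)) y.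
Proof.
rewrite -(pmulr_rge0 _ tau_gt0) -polyformZ.
have -> : tau *: ('X * (tau%:P - 'X)) =
    'X * (tau%:P - 'X) * 'X + (tau%:P - 'X) * 'X * (tau%:P - 'X).
  by rewrite -mul_polyC; ring.
rewrite polyformD -!polyform_conj addr_ge0 //.
by rewrite polyformB polyformC subr_ge0.
Qed.

Lemma polyform_Xpow_ge0 k y : 0 <= polyform 'X^k y.
Proof.
by rewrite -[_ ^+ k]mulr1; apply: polyform_Xpow_mul_ge0 => // y'; rewrite mulr1.
Qed.

Lemma polyform_Xpow_le k y : polyform 'X^k y <= tau ^+ k * polyform 1 y.
Proof.
elim: k => [|k IH]; first by rewrite expr0 mul1r.
have : 0 <= polyform ('X^k * (tau%:P - 'X)) y.
  apply: polyform_Xpow_mul_ge0 => [y'|]; last exact: polyform_X_tau_ge0.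
  by rewrite polyformB polyformC subr_ge0.
rewrite mulrBr mulrC mul_polyC -exprSr polyformB polyformZ subr_ge0 => le_k1.
by rewrite (le_trans le_k1) // exprS -mulrA ler_wpM2l // ltW.
Qed.

Lemma polyform_itv (d : {poly R}) y : (forall i, 0 <= d`_i) ->
  0 <= polyform d y <= d.[tau] * polyform 1 y.
Proof.
move=> d_ge0.
have -> : polyform d y = \sum_(i < size d) d`_i * polyform 'X^i y.
  rewrite -{1}(coefK d) poly_def polyform_sum.
  by apply: eq_bigr => i _; rewrite polyformZ.
rewrite horner_coef mulr_suml; apply/andP; split.
  by apply: sumr_ge0 => i _; rewrite mulr_ge0 ?polyform_Xpow_ge0.
by apply: ler_sum => i _; rewrite -mulrA ler_wpM2l ?polyform_Xpow_le.
Qed.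

End PolyForm.

Section Approx.
Variable R : realType.

Lemma approx_mx0 eps (A B : 'M[R]_0) : approx_mx eps A B.
Proof. by split=> x; rewrite !mxE !big_ord0. Qed.

Lemma approx_mx_of_defect n eps dl (A B : 'M[R]_n) :
    0 <= dl -> expR (- eps) <= 1 - dl ->
    (forall x, 0 <= qform A x /\ 0 <= qform A x - qform B x <= dl * qform A x) ->
  approx_mx eps B A.
Proof.
move=> dl_ge0 eps_dl defect.
have eK : expR eps * expR (- eps) = 1 by rewrite -expRD subrr expR0.
have e_gt0 := expR_gt0 eps; have eN_gt0 := expR_gt0 (- eps).
split=> x; have [a_ge0 /andP[b_le_a ab_le]] := defect x;
  have dla_ge0 : 0 <= dl * qform A x by rewrite mulr_ge0.
- change (qform A x <= qform (expR eps *: B) x); rewrite qformZ; nra.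
- change (qform (expR (- eps) *: B) x <= qform A x); rewrite qformZ; nra.
Qed.

Lemma posdef_mx_unit n (M : 'M[R]_n) : posdef_mx M -> M \in unitmx.
Proof.
case=> _ M_pos; rewrite unitmxE unitfE; apply/negP => /det0P[v v_neq0 vM0].
have := M_pos v^T; rewrite trmx_eq0 v_neq0 trmxK vM0 mul0mx mxE => /(_ isT).
by rewrite ltxx.
Qed.

Lemma qform_invmx n (M : 'M[R]_n) y :
  posdef_mx M -> qform (invmx M) (M *m y) = qform M y.
Proof.
move=> M_pd; have [M_sym _] := M_pd.
by rewrite -qform_mulmx M_sym mulmxV ?mul1mx // posdef_mx_unit.
Qed.

End Approx.

Section Expressions.
Variable R : realType.

Fixpoint horner_expr (t : expr R false false) (l : seq R) : expr R false false :=
  if l is a :: l' then EAdd (EScale a (EId R false)) (EMul (horner_expr t l') t)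
  else EScale 0 (EId R false).

Definition poly_expr t (p : {poly R}) := horner_expr t p.

Lemma poly_expr_deg t p : (expr_deg (poly_expr t p) <= size p * expr_deg t)%N.
Proof.
rewrite /poly_expr; elim: (polyseq p) => [|a l IH] //=.
by rewrite max0n mulSnr leq_add2r.
Qed.

Lemma poly_expr_eval n m (M : 'M[R]_n.+1) (Z : 'M[R]_(n.+1, m)) t p :
  expr_eval M Z (poly_expr t p) = horner_mx (expr_eval M Z t) p.
Proof.
rewrite /poly_expr -{2}(polyseqK p); elim: (polyseq p) => [|a l IH] /=.
  by rewrite scale0r rmorph0.
rewrite IH cons_poly_def rmorphD rmorphM /= horner_mx_X horner_mx_C -mulmxE.
by rewrite scalemx1 addrC.
Qed.

End Expressions.

Section Preconditioner.
Variable R : realType.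

Definition precond_step n m (c0 : R) (M : 'M[R]_n) (Z : 'M[R]_(n, m)) :=
  1%:M - expR (- c0) *: (Z *m Z^T *m M).

Definition precond_rate (c0 : R) := 1 - expR (- c0) ^+ 2.

Lemma precond_rate_itv c0 : 0 < c0 -> 0 < precond_rate c0 < 1.
Proof.
move=> c0_gt0; have e_gt0 := expR_gt0 (- c0).
have e_lt1 : expR (- c0) < 1 by rewrite expR_lt1 oppr_lt0.
by rewrite /precond_rate expr2; apply/andP; split; nra.
Qed.

Definition sqrt_precond n m c0 (M : 'M[R]_n.+1) (Z : 'M[R]_(n.+1, m)) N :=
  expR (- c0 / 2) *: (horner_mx (precond_step c0 M Z) (sqrt_trunc R N) *m Z).

Definition precond_step_expr c0 : expr R false false :=
  EAdd (EId R false) (EScale (- expR (- c0)) (EMul (EMul (EZ R) (EZt R)) (Defs.EM R))).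

Definition sqrt_precond_expr c0 N : expr R false true :=
  EScale (expR (- c0 / 2))
    (EMul (poly_expr (precond_step_expr c0) (sqrt_trunc R N)) (EZ R)).

Lemma sqrt_precond_expr_deg c0 N :
  (expr_deg (sqrt_precond_expr c0 N) <= 3 * N + 4)%N.
Proof.
have := poly_expr_deg (precond_step_expr c0) (sqrt_trunc R N).
have := size_poly N.+1 (sqrt_coef R).
rewrite /=; move: (expr_deg _) => d; move: (size _) => s; lia.
Qed.

Lemma sqrt_precond_expr_eval n m c0 N (M : 'M[R]_n.+1) (Z : 'M[R]_(n.+1, m)) :
  expr_eval M Z (sqrt_precond_expr c0 N) = sqrt_precond c0 M Z N.
Proof. by rewrite /= poly_expr_eval /= scaleNr. Qed.

End Preconditioner.

Section SqrtPreconditioner.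
Variables (R : realType) (c0 : R) (n m : nat).
Variables (M : 'M[R]_n.+1) (Z : 'M[R]_(n.+1, m)).
Hypothesis c0_gt0 : 0 < c0.
Hypothesis M_pd : posdef_mx M.
Hypothesis MZ_approx : approx_mx c0 (invmx M) (Z *m Z^T).

Let T := precond_step c0 M Z.
Local Notation Q := (polyform M T).

Lemma precond_step_adj : M *m T = T^T *m M.
Proof.
have M_sym : M^T = M := M_pd.1.
have MT : M *m T = M - expR (- c0) *: (M *m Z *m (M *m Z)^T).
  by rewrite /T /precond_step mulmxBr mulmx1 -scalemxAr trmx_mul M_sym !mulmxA.
rewrite -[in RHS]M_sym -trmx_mul MT [in RHS]linearB [in RHS]linearZ /=.
by rewrite [(_ *m _^T)^T]trmx_mul trmxK M_sym.
Qed.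

Lemma polyform_step1 y : Q 1 y = qform M y.
Proof. by rewrite /polyform rmorph1 mulmx1. Qed.

Lemma qform_ZZt_step y :
  qform (Z *m Z^T) (M *m y) = expR c0 * (Q 1 y - Q 'X y).
Proof.
have [M_sym _] := M_pd.
rewrite /polyform rmorph1 horner_mx_X /T /precond_step mulmxBr mulmx1.
rewrite qformB subKr -scalemxAr qformZ mulrA -expRD subrr expR0 mul1r.
by rewrite -qform_mulmx M_sym !mulmxA.
Qed.

Lemma polyform_step1_ge0 y : 0 <= Q 1 y.
Proof.
rewrite polyform_step1; have [_ M_pos] := M_pd.
have [->|y_neq0] := eqVneq y 0; first by rewrite /qform mulmx0 mxE.
exact/ltW/M_pos.
Qed.

Lemma polyform_stepX_itv y : 0 <= Q 'X y <= precond_rate c0 * Q 1 y.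
Proof.
have [ZZt_le ZZt_ge] := MZ_approx.
have up : qform (Z *m Z^T) (M *m y) <= qform (expR c0 *: invmx M) (M *m y).
  exact: ZZt_le.
have lo : qform (expR (- c0) *: invmx M) (M *m y) <= qform (Z *m Z^T) (M *m y).
  exact: ZZt_ge.
rewrite !qformZ qform_invmx // qform_ZZt_step -polyform_step1 in up lo.
rewrite ler_pM2l ?expR_gt0 // in up.
have eK : expR (- c0) * expR c0 = 1 by rewrite -expRD addNr expR0.
have := ler_wpM2l (ltW (expR_gt0 (- c0))) lo; rewrite !mulrA eK mul1r.
have := polyform_step1_ge0 y; rewrite /precond_rate expr2; nra.
Qed.

Lemma qform_sqrt_precond N y (C := sqrt_precond c0 M Z N) :
  qform (C *m C^T) (M *m y) = Q 1 y - Q (sqrt_defect R N) y.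
Proof.
set S := horner_mx T (sqrt_trunc R N).
have CCt : C *m C^T = expR (- c0) *: (S^T^T *m (Z *m Z^T) *m S^T).
  rewrite /C /sqrt_precond -/T -/S linearZ /= -scalemxAl -scalemxAr scalerA.
  by rewrite -expRD -splitr trmxK trmx_mul !mulmxA.
have StM : S^T *m (M *m y) = M *m (S *m y).
  by rewrite mulmxA -(mulmx_horner_adj precond_step_adj) mulmxA.
rewrite CCt qformZ qform_mulmx StM qform_ZZt_step mulrA -expRD addNr expR0 mul1r.
rewrite -polyformB polyform_conj ?precond_step_adj // -polyformB.
by congr (Q _ y); rewrite /sqrt_defect; ring.
Qed.

Lemma sqrt_precond_defect N x (C := sqrt_precond c0 M Z N) :
  0 <= qform (invmx M) x /\
  0 <= qform (invmx M) x - qform (C *m C^T) x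
    <= precond_rate c0 ^+ N.+1 * qform (invmx M) x.
Proof.
have /andP[rate_gt0 rate_lt1] := precond_rate_itv c0_gt0.
have X_ge0 y : 0 <= Q 'X y by case/andP: (polyform_stepX_itv y).
have X_le y : Q 'X y <= precond_rate c0 * Q 1 y by case/andP: (polyform_stepX_itv y).
rewrite -(mulKVmx (posdef_mx_unit M_pd) x); set y := invmx M *m x.
rewrite qform_sqrt_precond qform_invmx // -polyform_step1 subKr.
have /andP[d_ge0 d_le] := polyform_itv precond_step_adj rate_gt0
  polyform_step1_ge0 X_ge0 X_le y (coef_sqrt_defect_ge0 R N).
split; first exact: polyform_step1_ge0.
rewrite d_ge0 (le_trans d_le) // ler_wpM2r ?polyform_step1_ge0 //.
by rewrite sqrt_defect_le_pow // !ltW.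
Qed.

End SqrtPreconditioner.

Section ScalarBounds.
Variable R : realType.

Lemma exprn_le_expRN (t a : R) k : 0 < t -> a <= k%:R * - ln t -> t ^+ k <= expR (- a).
Proof.
move=> t_gt0 a_le; rewrite -{1}(lnK (_ : t \in Num.pos)) ?posrE //.
by rewrite -expRM_natl ler_expR; rewrite mulrN in a_le; lra.
Qed.

Lemma expRN_le_1_subr_sqr (d e : R) :
  0 <= d <= 2^-1 -> d <= e -> expR (- e) <= 1 - d ^+ 2.
Proof.
move=> /andP[d_ge0 d_le] d_le_e.
have : expR (- e) <= expR (- d) by rewrite ler_expR lerN2.
have dK : expR (- d) * expR d = 1 by rewrite -expRD addNr expR0.
have := expR_ge1Dx d; have := expR_gt0 (- d); rewrite expr2; nra.
Qed.

Lemma expRN_le_1_subr_pow (t eps : R) : 0 < t < 1 -> 0 < eps ->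
  expR (- eps) <= 1 - t ^+ (Num.truncn (2 * Num.max 1 (ln eps^-1) / - ln t)).+1.
Proof.
move=> /andP[t_gt0 t_lt1] eps_gt0.
set mu := Num.max 1 _; set lam := - ln t.
have lam_gt0 : 0 < lam by rewrite oppr_gt0 ln_lt0 // t_gt0.
have mu_ge1 : 1 <= mu by rewrite le_max lexx.
have ratio_ge0 : 0 <= 2 * mu / lam by rewrite divr_ge0 ?mulr_ge0 ?ltW //; lra.
have /andP[_ N_gt] := truncn_itv ratio_ge0.
apply: (@le_trans _ _ (1 - expR (- mu) ^+ 2)).
  apply: expRN_le_1_subr_sqr => [|{N_gt}].
    rewrite expR_ge0 (@le_trans _ _ (expR (-1))) ?ler_expR ?lerN2 //=.
    rewrite expRN lef_pV2 ?posrE ?expR_gt0 //.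
    by have := expR_ge1Dx (1 : R); lra.
  rewrite (@le_trans _ _ (expR (- ln eps^-1))) ?ler_expR ?lerN2 ?le_max ?lexx ?orbT //.
  by rewrite expRN lnK ?posrE ?invr_gt0 // invrK.
rewrite lerD2l lerN2 -expRM_natl mulrN exprn_le_expRN //.
by rewrite -/lam -ler_pdivrMr // ltW.
Qed.

Lemma natr_truncn_affine_le (mu lam : R) : 0 < lam -> 1 <= mu ->
  (3 * Num.truncn (2 * mu / lam) + 4)%:R <= (6 / lam + 4) * mu.
Proof.
move=> lam_gt0 mu_ge1.
have ratio_ge0 : 0 <= 2 * mu / lam by rewrite divr_ge0 ?ltW //; lra.
have /andP[N_le _] := truncn_itv ratio_ge0.
have -> : (6 / lam + 4) * mu = 3 * (2 * mu / lam) + 4 * mu by ring.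
by rewrite natrD natrM; lra.
Qed.

End ScalarBounds.

Theorem mainTheorem11 (R : realType) :
  forall c0 : R, 0 < c0 ->
  exists K : R,
  forall (n m : nat) (M : 'M[R]_n) (Z : 'M[R]_(n, m)),
    posdef_mx M ->
    approx_mx c0 (invmx M) (Z *m Z^T) ->
    forall eps : R, 0 < eps ->
    exists (b : bool) (C : expr R false b),
      ((expr_deg C)%:R <= K * Num.max 1 (ln (eps^-1)))
      /\ approx_mx eps (expr_eval M Z C *m (expr_eval M Z C)^T) (invmx M).
Proof.
move=> c0 c0_gt0; have /andP[rate_gt0 rate_lt1] := precond_rate_itv c0_gt0.
set lam := - ln (precond_rate c0).
have lam_gt0 : 0 < lam by rewrite oppr_gt0 ln_lt0 // rate_gt0.
exists (6 / lam + 4) => n m M Z M_pd MZ_approx eps eps_gt0.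
set N := Num.truncn (2 * Num.max 1 (ln eps^-1) / lam).
exists true, (sqrt_precond_expr c0 N); split.
  apply: le_trans (natr_truncn_affine_le lam_gt0 _); last by rewrite le_max lexx.
  by rewrite ler_nat sqrt_precond_expr_deg.
case: n M Z M_pd MZ_approx => [|n] M Z M_pd MZ_approx; first exact: approx_mx0.
rewrite sqrt_precond_expr_eval.
apply: approx_mx_of_defect (sqrt_precond_defect c0_gt0 M_pd MZ_approx N).
  by rewrite exprn_ge0 // ltW.
by rewrite expRN_le_1_subr_pow // rate_gt0.
Qed.
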